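(* Let $n\ge2$, let $p>2$ be prime, $M=(p-1)/2$, and $\delta>0$. Let $z_j^{(i)}$, $\tilde z_j^{(i)}\in\mathbb{Q}_{(M,\delta)}$ (for $i\in\{1,2\}$, $j\in\{1,\dots,n\}$) and $\tilde r=\frac{1}{n-1}\sum_{j=1}^n\tilde z_j^{(1)}\tilde z_j^{(2)}$ be as in the context. Suppose $R\in\mathbb{R}$ satisfies $|\tilde z_j^{(i)}|\le R$ for all $i,j$, and $R\le n/\delta$. If $M\ge\frac{n-1}{\delta^2}+n\left(\frac{R}{\delta}+\frac14\right)$, then $$\tilde r=\frac{1}{n-1}\,\varphi_{\delta^2}^{-1}\Big(\sum_{j=1}^n\varphi_\delta(\tilde z_j^{(1)})\,\varphi_\delta(\tilde z_j^{(2)})\Big),$$ where the sum and products inside $\varphi_{\delta^2}^{-1}$ are computed in $\mathbb{F}_p$.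
   Context: For $\gamma>0$, $\mathbb{Q}_{(M,\gamma)}=\{x\gamma: x\in\mathbb{Z},\ -M\le x\le M\}$ and $\varphi_\gamma:\mathbb{Q}_{(M,\gamma)}\to\mathbb{F}_p$, $\varphi_\gamma(x\gamma)=x\bmod p$; with $M=(p-1)/2$ this is a bijection with inverse $\varphi_\gamma^{-1}(y)=\gamma\psi(y)$, where, representing $y$ by an integer in $\{0,\dots,p-1\}$, $\psi(y)=y$ if $y\le M$ and $\psi(y)=y-p$ otherwise. For $i=1,2$, $x_1^{(i)},\dots,x_n^{(i)}$ are real samples (not all equal) with mean $\bar x^{(i)}$, $s^{(i)}=\sqrt{\frac{1}{n-1}\sum_j(x_j^{(i)}-\bar x^{(i)})^2}$, and $z_j^{(i)}=(x_j^{(i)}-\bar x^{(i)})/s^{(i)}$; $\tilde z_j^{(i)}$ is a nearest element of $\mathbb{Q}_{(M,\delta)}$ to $z_j^{(i)}$, with $|z_j^{(i)}-\tilde z_j^{(i)}|\le\delta/2$. *)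

From HB Require Import structures.
From mathcomp Require Import all_boot all_order all_algebra.
From mathcomp Require Import reals.
Set Implicit Arguments. Unset Strict Implicit. Unset Printing Implicit Defensive.
Import Order.TTheory GRing.Theory Num.Theory.
Local Open Scope ring_scope.

Section Defs.
Variable R : realType.

Definition inQ (M : nat) (gamma : R) (q : R) : Prop :=
  exists x : int, (- (M%:Z) <= x)%R /\ (x <= M%:Z)%R /\ q = x%:~R * gamma.

(* phi_gamma (x*gamma) = x mod p ; for q in Q_(M,gamma) (gamma>0), q/gamma is
   the integer x, recovered exactly by floor. *)
Definition phi (p : nat) (gamma : R) (q : R) : 'F_p :=
  (Num.floor (q / gamma))%:~R.

Definition psi (p : nat) (y : 'F_p) : int :=
  if (val y <= (p.-1)./2)%N then (val y)%:Z else (val y)%:Z - p%:Z.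

Definition phi_inv (p : nat) (gamma : R) (y : 'F_p) : R := gamma * (psi y)%:~R.

Definition mean (n : nat) (x : 'I_n -> R) : R := (\sum_(j < n) x j) / n%:R.

Definition sdev (n : nat) (x : 'I_n -> R) : R :=
  Num.sqrt ((\sum_(j < n) (x j - mean x) ^+ 2) / (n.-1)%:R).

Definition zscore (n : nat) (x : 'I_n -> R) (j : 'I_n) : R :=
  (x j - mean x) / sdev x.

End Defs.

(** The z-scores of a sample have sum of squares [n - 1], so by AM-GM their
    dot product has absolute value at most [n - 1]; rounding each z-score to the
    grid [delta Z] changes every product by at most [R delta + delta^2/4].  Hence
    the dot product of the rounded values is [S delta^2] for an integer [S] with
    [|S| <= (n-1)/delta^2 + n (R/delta + 1/4) <= M].  Reducing [S] modulo [p] and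
    lifting back by [psi] is then the identity, so computing in [F_p] is exact. *)

From HB Require Import structures.
From mathcomp Require Import all_boot all_order all_algebra.
From mathcomp Require Import reals.
From mathcomp Require Import lra zify ring.
Import Order.TTheory GRing.Theory Num.Theory.
Local Open Scope ring_scope.

Lemma psi_intr (p : nat) (S : int) : prime p ->
  `|S| <= ((p.-1)./2)%:Z -> psi (S%:~R : 'F_p) = S.
Proof.
move=> p_pr; have := prime_gt1 p_pr.
case: S => k; rewrite ?NegzE ?normrN /= => p_gt1 k_le.
- rewrite /psi /= val_Fp_nat // modn_small; last by lia.
  by have -> : (k <= (p.-1)./2)%N by lia.
- have -> : (- k.+1%:Z)%:~R = (p - k.+1)%:R :> 'F_p.
    by rewrite mulrNz natrB ?pchar_Fp_0 ?sub0r //; lia.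
  rewrite /psi /= val_Fp_nat // modn_small; last by lia.
  have -> : (p - k.+1 <= (p.-1)./2)%N = false by lia.
  lia.
Qed.

Lemma inQ_floorK {R : realType} {M : nat} {gamma q : R} :
  0 < gamma -> inQ M gamma q -> q = (Num.floor (q / gamma))%:~R * gamma.
Proof.
by move=> gamma_gt0 [x [_ [_ ->]]]; rewrite mulfK ?gt_eqF // intrKfloor.
Qed.

Lemma normrM_le_mean_sqr (R : realFieldType) (u v : R) :
  `|u * v| <= (u ^+ 2 + v ^+ 2) / 2.
Proof.
rewrite normrM -(real_normK (num_real u)) -(real_normK (num_real v)).
have := sqr_ge0 (`|u| - `|v|); nra.
Qed.

Lemma normr_rounded_mulB (R : realFieldType) (a1 a2 z1 z2 r d : R) :
  `|a1| <= r -> `|a2| <= r -> `|z1 - a1| <= d / 2 -> `|z2 - a2| <= d / 2 ->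
  `|a1 * a2 - z1 * z2| <= r * d + d ^+ 2 / 4.
Proof.
move=> a1_le a2_le z1_near z2_near.
have -> : a1 * a2 - z1 * z2 = a1 * (a2 - z2) + (a1 - z1) * z2 by ring.
apply: le_trans (ler_normD _ _) _; rewrite !normrM.
have z2_le : `|z2| <= r + d / 2.
  have -> : z2 = a2 + (z2 - a2) by ring.
  by apply: le_trans (ler_normD _ _) _; apply: lerD.
have le1 : `|a1| * `|a2 - z2| <= r * (d / 2).
  by apply: ler_pM; rewrite // distrC.
have le2 : `|a1 - z1| * `|z2| <= d / 2 * (r + d / 2).
  by apply: ler_pM; rewrite // distrC.
lra.
Qed.

Section ZScores.
Context {R : realType} {n : nat}.
Hypothesis n_ge2 : (2 <= n)%N.

Lemma sum_zscore_sqr (x : 'I_n -> R) :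
  (exists j k, x j != x k) -> \sum_j zscore x j ^+ 2 = (n.-1)%:R.
Proof.
move=> [j [k x_jk]].
set Q := \sum_(i < n) (x i - mean x) ^+ 2.
have Q_ge0 : 0 <= Q by apply: sumr_ge0 => i _; exact: sqr_ge0.
have Q_neq0 : Q != 0.
  apply: contraNneq x_jk => /psumr_eq0P Q0.
  have at_mean i : x i = mean x.
    by apply/eqP; rewrite -subr_eq0 -sqrf_eq0 Q0 // => l _; exact: sqr_ge0.
  by rewrite !at_mean.
have n1_neq0 : (n.-1)%:R != 0 :> R by rewrite pnatr_eq0; lia.
have sdev_sqr : sdev x ^+ 2 = Q / (n.-1)%:R.
  by rewrite sqr_sqrtr // divr_ge0 ?ler0n.
under eq_bigr do rewrite /zscore expr_div_n.
rewrite -mulr_suml -/Q sdev_sqr.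
by field; apply/andP.
Qed.

Context {x1 x2 : 'I_n -> R}.
Hypotheses (x1_ne : exists j k, x1 j != x1 k) (x2_ne : exists j k, x2 j != x2 k).

Lemma normr_sum_zscore_mul_le :
  `|\sum_j zscore x1 j * zscore x2 j| <= (n.-1)%:R.
Proof.
apply: le_trans (ler_norm_sum _ _ _) _.
apply: (@le_trans _ _ (\sum_j (zscore x1 j ^+ 2 + zscore x2 j ^+ 2) / 2)).
  by apply: ler_sum => j _; exact: normrM_le_mean_sqr.
by rewrite -mulr_suml big_split /= !sum_zscore_sqr //; lra.
Qed.

Lemma normr_sum_rounded_mul_le {zt1 zt2 : 'I_n -> R} {r d : R} :
  (forall j, `|zscore x1 j - zt1 j| <= d / 2) ->
  (forall j, `|zscore x2 j - zt2 j| <= d / 2) ->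
  (forall j, `|zt1 j| <= r) -> (forall j, `|zt2 j| <= r) ->
  `|\sum_j zt1 j * zt2 j| <= (n.-1)%:R + n%:R * (r * d + d ^+ 2 / 4).
Proof.
move=> near1 near2 le1 le2.
set Z := \sum_j zscore x1 j * zscore x2 j.
have rounding_err : `|\sum_j zt1 j * zt2 j - Z| <= n%:R * (r * d + d ^+ 2 / 4).
  have -> : n%:R * (r * d + d ^+ 2 / 4) = \sum_(j < n) (r * d + d ^+ 2 / 4).
    by rewrite sumr_const card_ord mulr_natl.
  rewrite -sumrB; apply: le_trans (ler_norm_sum _ _ _) _.
  by apply: ler_sum => j _; apply: normr_rounded_mulB; rewrite // distrC.
have := normr_sum_zscore_mul_le; rewrite -/Z.
have := ler_normD (\sum_j zt1 j * zt2 j - Z) Z; rewrite subrK.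
lra.
Qed.

End ZScores.

Theorem lemma3 (R : realType) (n p : nat) (delta Rb : R)
  (x1 x2 zt1 zt2 : 'I_n -> R) :
  (2 <= n)%N -> prime p -> (2 < p)%N -> 0 < delta ->
  (* samples not all equal *)
  (exists j k : 'I_n, x1 j != x1 k) ->
  (exists j k : 'I_n, x2 j != x2 k) ->
  (* zt are nearest elements of Q_(M,delta) to the z-scores *)
  (forall j, inQ (p.-1)./2 delta (zt1 j)) ->
  (forall j, inQ (p.-1)./2 delta (zt2 j)) ->
  (forall j q, inQ (p.-1)./2 delta q ->
     `|zscore x1 j - zt1 j| <= `|zscore x1 j - q|) ->
  (forall j q, inQ (p.-1)./2 delta q ->
     `|zscore x2 j - zt2 j| <= `|zscore x2 j - q|) ->
  (forall j, `|zscore x1 j - zt1 j| <= delta / 2) ->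
  (forall j, `|zscore x2 j - zt2 j| <= delta / 2) ->
  (forall j, `|zt1 j| <= Rb) ->
  (forall j, `|zt2 j| <= Rb) ->
  Rb <= n%:R / delta ->
  ((p.-1)./2)%:R >= (n.-1)%:R / delta ^+ 2 + n%:R * (Rb / delta + 1 / 4) ->
  (\sum_(j < n) zt1 j * zt2 j) / (n.-1)%:R =
    phi_inv (delta ^+ 2)
      (\sum_(j < n) phi p delta (zt1 j) * phi p delta (zt2 j)) / (n.-1)%:R.
Proof.
move=> n_ge2 p_pr _ delta_gt0 x1_ne x2_ne inQ1 inQ2 _ _ near1 near2 le1 le2 _ M_ge.
pose a j := Num.floor (zt1 j / delta); pose b j := Num.floor (zt2 j / delta).
pose S := \sum_j a j * b j.
have sum_real : \sum_j zt1 j * zt2 j = S%:~R * delta ^+ 2.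
  rewrite rmorph_sum mulr_suml; apply: eq_bigr => j _.
  rewrite [zt1 j](inQ_floorK delta_gt0 (inQ1 j)).
  rewrite [zt2 j](inQ_floorK delta_gt0 (inQ2 j)) rmorphM /=; ring.
have sum_Fp : \sum_j phi p delta (zt1 j) * phi p delta (zt2 j) = S%:~R :> 'F_p.
  by rewrite rmorph_sum; apply: eq_bigr => j _; rewrite rmorphM.
have S_le : `|S| <= ((p.-1)./2)%:Z.
  have delta2_gt0 : 0 < delta ^+ 2 by exact: exprn_gt0.
  rewrite -(ler_int R) intr_norm -(ler_pM2r delta2_gt0).
  have := normr_sum_rounded_mul_le n_ge2 x1_ne x2_ne near1 near2 le1 le2.
  rewrite sum_real normrM [`|delta ^+ 2|]gtr0_norm // => /le_trans; apply.
  have -> : (n.-1)%:R + n%:R * (Rb * delta + delta ^+ 2 / 4) =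
      ((n.-1)%:R / delta ^+ 2 + n%:R * (Rb / delta + 1 / 4)) * delta ^+ 2.
    by field; rewrite gt_eqF.
  by rewrite ler_pM2r.
by rewrite sum_real sum_Fp /phi_inv psi_intr // [S%:~R * _]mulrC.
Qed.
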